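(* Define $P,H\in I(\mathcal{S})$ by $P(\sigma,\pi)=\binom{\pi}{\sigma}$ and $H(\sigma,\pi)=\binom{\pi}{\sigma}\eta(\sigma,\pi)$. Then $P=e^H=\sum_{\ell\ge0}H^\ell/\ell!$ (each entry being a finite sum).
   Context: $\mathcal{S}_n$ is the set of permutations of $[n]$ (written as words $\pi(1)\cdots\pi(n)$), and $\mathcal{S}=\bigcup_{n\ge0}\mathcal{S}_n$ (including the empty permutation); $|\pi|$ is the length. Two integer sequences $a_1\cdots a_k$, $b_1\cdots b_k$ are order-isomorphic if $a_i<a_j\iff b_i<b_j$ for all $i,j$. For $\sigma\in\mathcal{S}_k$, $\pi\in\mathcal{S}_n$, $\binom{\pi}{\sigma}$ is the number of order-preserving injections $\varphi:[k]\to[n]$ such that $\pi(\varphi(1))\cdots\pi(\varphi(k))$ is order-isomorphic to $\sigma$. $\mathcal{S}$ is partially ordered by $\sigma\le\pi$ iff $\binom{\pi}{\sigma}>0$. $I(\mathcal{S})$ is the incidence algebra over $\mathbb{Q}$: functions on pairs $(x,y)$ with $x\le y$, convolution $(FG)(x,y)=\sum_{x\le z\le y}F(x,z)G(z,y)$, identity $\delta(x,y)=[x=y]$ (Iverson bracket). $\eta(x,y)=[y\text{ covers }x]$; here $\pi$ covers $\sigma$ iff $\sigma\le\pi$ and $|\pi|=|\sigma|+1$. *)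

From HB Require Import structures.
From mathcomp Require Import all_boot all_order all_algebra.
Set Implicit Arguments. Unset Strict Implicit. Unset Printing Implicit Defensive.
Import Order.TTheory GRing.Theory Num.Theory.

(* A permutation of [n] is a word pi(1)...pi(n), i.e. a seq nat that is a
   rearrangement of 1..n (n = size). The empty word is the empty permutation. *)
Definition is_perm (p : seq nat) : bool := perm_eq p (iota 1 (size p)).

Definition order_iso (a b : seq nat) : bool :=
  (size a == size b) &&
  [forall i : 'I_(size a), forall j : 'I_(size a),
      (nth 0 a i < nth 0 a j) == (nth 0 b i < nth 0 b j)].

(* binom(pi, sigma): number of order-preserving injections
   phi : [k] -> [n] with pi(phi(1))...pi(phi(k)) order-isomorphic to sigma *)
Definition pcount (sigma pi : seq nat) : nat :=
  #|[set f : {ffun 'I_(size sigma) -> 'I_(size pi)} |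
      [forall i : 'I_(size sigma), forall j : 'I_(size sigma),
          (i < j) ==> (f i < f j)] &&
      order_iso [seq nth 0 pi (f i) | i <- enum 'I_(size sigma)] sigma]|.

Definition ple (sigma pi : seq nat) : bool := 0 < pcount sigma pi.

(* incidence-algebra elements over Q, represented as functions on pairs
   (only values at pairs x <= y matter) *)
Definition incf := seq nat -> seq nat -> rat.

(* convolution: sum over permutations z with x <= z <= y; any such z has
   size <= size y, so we enumerate all permutations of size m <= size y *)
Definition conv (F G : incf) : incf := fun x y =>
  (\sum_(m < (size y).+1)
     \sum_(z <- permutations (iota 1 m) | ple x z && ple z y)
        F x z * G z y)%R.

Definition idelta : incf := fun x y => if x == y then 1%R else 0%R.

(* eta(x,y) = [y covers x] *)
Definition eta (x y : seq nat) : bool := ple x y && (size y == (size x).+1).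

Definition Pinc : incf := fun x y => ((pcount x y)%:R)%R.
Definition Hinc : incf := fun x y => if eta x y then ((pcount x y)%:R)%R else 0%R.

Fixpoint incpow (F : incf) (l : nat) : incf :=
  match l with
  | 0 => idelta
  | l'.+1 => conv (incpow F l') F
  end.

From Pilot Require Import Defs.
From HB Require Import structures.
From mathcomp Require Import all_boot all_order all_algebra.
From mathcomp Require Import zify.
Import Order.TTheory GRing.Theory Num.Theory.

(* Summing [pcount s z * pcount z p] over the permutations [z] of size [m]
   counts the occurrences of [s] in [p] together with an [m]-set of positions
   of [p] containing them, which gives [C(|p| - |s|, m - |s|) * pcount s p].
   Since [H] only links consecutive sizes, induction on [l] then gives
   [H^l(s, p) = l! * pcount s p] when [|p| = |s| + l] and [0] otherwise, so
   the exponential series has a single nonzero term, the one with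
   [l = |p| - |s|], and it equals [P(s, p)]. *)

Definition order_iso_spec (a b : seq nat) : Prop :=
  size a = size b /\
  forall i j, i < size a -> j < size a ->
    (nth 0 a i < nth 0 a j) = (nth 0 b i < nth 0 b j).

Lemma order_isoP a b : reflect (order_iso_spec a b) (order_iso a b).
Proof.
apply: (iffP andP) => [[/eqP eq_size /forallP iso]|[eq_size iso]].
  split=> // i j ltia ltja.
  by have /forallP/(_ (Ordinal ltja))/eqP := iso (Ordinal ltia).
split; first exact/eqP.
by apply/forallP => i; apply/forallP => j; apply/eqP; apply: iso.
Qed.

Lemma order_iso_refl a : order_iso a a.
Proof. exact/order_isoP. Qed.

Lemma order_iso_sym a b : order_iso a b -> order_iso b a.
Proof.
move/order_isoP=> [eq_size iso]; apply/order_isoP; split=> // i j.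
by rewrite -eq_size => ltia ltja; rewrite iso.
Qed.

Lemma order_iso_trans a b c : order_iso a b -> order_iso b c -> order_iso a c.
Proof.
move=> /order_isoP[eq_ab iso_ab] /order_isoP[eq_bc iso_bc].
apply/order_isoP; split; first by rewrite eq_ab.
by move=> i j ltia ltja; rewrite iso_ab // iso_bc // -eq_ab.
Qed.

Lemma mask_nth_iota {T : Type} (x0 : T) m s :
  mask m s = map (nth x0 s) (mask m (iota 0 (size s))).
Proof. by rewrite map_mask -/(mkseq _ _) mkseq_nth. Qed.

Lemma order_iso_mask m a b : order_iso a b -> order_iso (mask m a) (mask m b).
Proof.
move=> /order_isoP[eq_size iso]; apply/order_isoP.
rewrite (mask_nth_iota 0 m a) (mask_nth_iota 0 m b) -eq_size.
set s := mask m _; have lt_s i : i < size s -> nth 0 s i < size a.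
  by move=> ltis; have /mem_mask := mem_nth 0 ltis; rewrite mem_iota.
split=> [|i j]; first by rewrite !size_map.
by rewrite size_map => ltis ltjs; rewrite !(nth_map 0) // iso ?lt_s.
Qed.

Lemma count_ltn_mono (u : seq nat) {x y : nat} : x <= y ->
  count (fun a => a < x) u <= count (fun a => a < y) u.
Proof. by move=> lexy; apply: sub_count => z /= ltzx; lia. Qed.

Lemma count_ltn_strict_mono (u : seq nat) {x y : nat} : x < y -> x \in u ->
  count (fun a => a < x) u < count (fun a => a < y) u.
Proof.
move=> ltxy; elim: u => [|a u IHu] //=; rewrite inE => /orP[/eqP <-|xu].
  by rewrite ltnn ltxy ltnS count_ltn_mono // ltnW.
have := IHu xu; have : (a < x) <= (a < y) by case: (ltnP a x) => //= ?; lia.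
lia.
Qed.

Lemma count_ltn_iota x s n :
  count (fun a => a < x) (iota s n) = minn (x - s) n.
Proof.
elim: n s => [|n IHn] s /=; first by rewrite minn0.
by rewrite IHn; case: (ltnP s x) => les; lia.
Qed.

Definition std (u : seq nat) := [seq (count (fun a => a < x) u).+1 | x <- u].

Lemma size_std u : size (std u) = size u.
Proof. exact: size_map. Qed.

Lemma order_iso_std {u : seq nat} : uniq u -> order_iso (std u) u.
Proof.
move=> uniq_u; apply/order_isoP; split; first exact: size_std.
move=> i j; rewrite size_std => ltiu ltju; rewrite !(nth_map 0) // ltnS.
case: (ltnP (nth 0 u i) (nth 0 u j)) => cmp.
  by rewrite count_ltn_strict_mono // mem_nth.
by apply/negbTE; rewrite -leqNgt count_ltn_mono.
Qed.

Lemma is_perm_std u : uniq u -> is_perm (std u).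
Proof.
move=> uniq_u; rewrite /is_perm size_std.
have sub_iota : {subset std u <= iota 1 (size u)}.
  move=> _ /mapP[x xu ->]; rewrite mem_iota add1n /= ltnS ltn_neqAle count_size andbT.
  by rewrite -all_count; apply/negP => /allP/(_ x xu); rewrite ltnn.
have uniq_std : uniq (std u).
  rewrite map_inj_in_uniq // => x y xu yu [eq_count].
  by case: (ltngtP x y) => // cmp;
    [have := count_ltn_strict_mono u cmp xu | have := count_ltn_strict_mono u cmp yu];
    rewrite eq_count ltnn.
have le_size : size (iota 1 (size u)) <= size (std u).
  by rewrite size_iota size_std.
have [_ eq_mem] := uniq_min_size uniq_std sub_iota le_size.
by apply: uniq_perm => //; apply: iota_uniq.
Qed.

Lemma perm_order_iso_std {z u : seq nat} : is_perm z -> order_iso z u -> z = std u.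
Proof.
rewrite /is_perm => perm_z /order_isoP[eq_size iso].
apply: (@eq_from_nth _ 0); first by rewrite size_std.
move=> i ltiz; rewrite (nth_map 0) -?eq_size //.
have : nth 0 z i \in iota 1 (size z) by rewrite -(perm_mem perm_z) mem_nth.
rewrite mem_iota => /andP[ge1 lt_size].
have rank_z : count (fun a => a < nth 0 z i) z = (nth 0 z i).-1.
  by rewrite (permP perm_z) count_ltn_iota; lia.
transitivity (count (fun a => a < nth 0 z i) z).+1; first by rewrite rank_z; lia.
congr S; rewrite -[z in LHS](mkseq_nth 0) -[u in RHS](mkseq_nth 0) -eq_size.
rewrite !count_map; apply: eq_in_count => j; rewrite mem_iota /= => ltj.
by rewrite !nth_mkseq // iso.
Qed.

Lemma order_iso_std_perm z u : is_perm z -> uniq u -> order_iso u z = (z == std u).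
Proof.
move=> perm_z uniq_u; apply/idP/eqP => [/order_iso_sym|->].
  exact: perm_order_iso_std.
exact/order_iso_sym/order_iso_std.
Qed.

Fixpoint masks (n k : nat) : seq bitseq :=
  if n is n'.+1 then
    (if k is k'.+1 then map (cons true) (masks n' k') else [::])
    ++ map (cons false) (masks n' k)
  else if k is 0 then [:: [::]] else [::].

Lemma mem_map_cons (y : bool) b (L : seq bitseq) :
  (b \in map (cons y) L) = if b is x :: b' then (x == y) && (b' \in L) else false.
Proof.
case: b => [|x b]; first by apply/mapP => -[].
by apply/mapP/andP => [[c cL [-> ->]]|[/eqP -> bL]]; last exists b.
Qed.

Lemma mem_masks n k b : (b \in masks n k) = (size b == n) && (count id b == k).
Proof.
elim: n k b => [|n IHn] k b; first by case: k; case: b.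
rewrite /= mem_cat; case: k => [|k]; rewrite ?in_nil !mem_map_cons.
  by case: b => [|[] b] //=; rewrite ?IHn ?andbF.
by case: b => [|[] b] //=; rewrite !IHn ?eqSS ?orbF ?andbF.
Qed.

Lemma uniq_masks n k : uniq (masks n k).
Proof.
elim: n k => [|n IHn] k /=; first by case: k.
have cons_inj (y : bool) : injective (cons y) by move=> ? ? [].
rewrite cat_uniq (map_inj_uniq (cons_inj false)) IHn andbT.
case: k => [|k] /=; first exact/hasPn.
rewrite (map_inj_uniq (cons_inj true)) IHn /=.
by apply/hasPn => _ /mapP[c _ ->]; rewrite mem_map_cons.
Qed.

Lemma masks_small {n k : nat} : n < k -> masks n k = [::].
Proof.
case E: (masks n k) => [|b L] // ltnk.
have : b \in masks n k by rewrite E mem_head.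
by rewrite mem_masks => /andP[/eqP sizeb /eqP countb]; have := count_size id b; lia.
Qed.

Lemma masks_full n : masks n n = [:: nseq n true].
Proof. by elim: n => [|n IHn] //=; rewrite IHn masks_small. Qed.

Lemma sum_masks_cons n k (G : bitseq -> nat) :
  \sum_(c <- masks n.+1 k) G c =
  (if k is k'.+1 then \sum_(c <- masks n k') G (true :: c) else 0)
  + \sum_(c <- masks n k) G (false :: c).
Proof. by rewrite big_cat big_map; case: k => [|k]; rewrite ?big_nil ?big_map. Qed.

(* An increasing map [k] -> [n] is encoded by the mask of its image. *)
Section IncreasingMaps.

Context {k n : nat}.
Implicit Types f g : {ffun 'I_k -> 'I_n}.

Definition increasing f :=
  [forall i : 'I_k, forall j : 'I_k, (i < j) ==> (f i < f j)].

Definition ffun_vals f := [seq nat_of_ord (f i) | i <- enum 'I_k].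

Definition ffun_mask f : bitseq := [seq j \in ffun_vals f | j <- iota 0 n].

Lemma size_ffun_vals f : size (ffun_vals f) = k.
Proof. by rewrite size_map size_enum_ord. Qed.

Lemma nth_ffun_vals f (i : 'I_k) : nth 0 (ffun_vals f) i = f i.
Proof.
rewrite (nth_map i) ?size_enum_ord //; congr (nat_of_ord (f _)).
by apply: val_inj; rewrite /= nth_enum_ord.
Qed.

Lemma size_ffun_mask f : size (ffun_mask f) = n.
Proof. by rewrite size_map size_iota. Qed.

Lemma mask_ffun_mask f : increasing f -> mask (ffun_mask f) (iota 0 n) = ffun_vals f.
Proof.
move=> /forallP incr_f; rewrite -filter_mask.
apply: (irr_sorted_eq ltn_trans ltnn).
- exact/sorted_filter/iota_ltn_sorted/ltn_trans.
- rewrite /ffun_vals sorted_map.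
  have : sorted ltn (map val (enum 'I_k)) by rewrite val_enum_ord iota_ltn_sorted.
  rewrite sorted_map; apply: sub_sorted => i j /= ltij.
  by have /forallP/(_ j)/implyP := incr_f i; apply.
move=> x; rewrite mem_filter mem_iota /=.
by case: (boolP (x \in ffun_vals f)) => //= /mapP[i _ ->]; rewrite ltn_ord.
Qed.

Lemma count_ffun_mask f : increasing f -> count id (ffun_mask f) = k.
Proof.
move=> incr_f; rewrite -(size_mask (s := iota 0 n)) ?size_ffun_mask ?size_iota //.
by rewrite mask_ffun_mask // size_ffun_vals.
Qed.

Lemma ffun_mask_inj f g : increasing f -> increasing g ->
  ffun_mask f = ffun_mask g -> f = g.
Proof.
move=> incr_f incr_g eq_mask.
have eq_vals : ffun_vals f = ffun_vals g by rewrite -!mask_ffun_mask // eq_mask.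
by apply/ffunP => i; apply: val_inj; rewrite /= -!nth_ffun_vals eq_vals.
Qed.

Lemma ffun_mask_surj b : size b = n -> count id b = k ->
  exists2 f, increasing f & ffun_mask f = b.
Proof.
move=> size_b count_b; set s := mask b (iota 0 n).
have size_s : size s = k by rewrite size_mask ?size_iota.
have lt_s (i : 'I_k) : nth 0 s i < n.
  have : nth 0 s i \in s by rewrite mem_nth // size_s.
  by move/mem_mask; rewrite mem_iota.
have sorted_s : sorted ltn s by exact/sorted_mask/iota_ltn_sorted/ltn_trans.
exists [ffun i => Ordinal (lt_s i)].
  apply/forallP => i; apply/forallP => j; apply/implyP => ltij; rewrite !ffunE /=.
  by apply: (sorted_ltn_nth ltn_trans 0 sorted_s) => //; rewrite inE size_s.
rewrite /ffun_mask; have -> : ffun_vals [ffun i => Ordinal (lt_s i)] = s.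
  rewrite /ffun_vals -[RHS](mkseq_nth 0) size_s /mkseq -val_enum_ord -map_comp.
  by apply: eq_map => i /=; rewrite ffunE.
rewrite /s -size_b.
elim: b {size_b count_b s size_s lt_s sorted_s} 0 => [|x b IHb] m //=.
case: x => /=.
  rewrite mem_head; congr cons; rewrite -[RHS](IHb m.+1).
  apply/eq_in_map => j; rewrite mem_iota inE => /andP[ltmj _].
  by rewrite gtn_eqF.
have notin_m : m \notin mask b (iota m.+1 (size b)).
  by apply/negP => /mem_mask; rewrite mem_iota ltnn.
by rewrite (negPf notin_m) IHb.
Qed.

End IncreasingMaps.

Lemma pcount_masks s w :
  pcount s w = \sum_(b <- masks (size w) (size s)) order_iso (mask b w) s.
Proof.
suff -> : pcount s w =
    count (fun b => order_iso (mask b w) s) (masks (size w) (size s)).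
  by rewrite -sum1_count big_mkcond.
rewrite /pcount cardsE cardE size_filter -enumT.
set k := size s; set n := size w.
rewrite (eq_count (a2 := fun f : {ffun 'I_k -> 'I_n} =>
   order_iso [seq nth 0 w (f i) | i <- enum 'I_k] s && increasing f)); last first.
  by move=> f; rewrite /= andbC.
rewrite -count_filter.
rewrite (eq_in_count (a2 := fun f => order_iso (mask (ffun_mask f) w) s)); last first.
  move=> f; rewrite mem_filter => /andP[incr_f _] /=.
  by rewrite (mask_nth_iota 0) -/n mask_ffun_mask // /ffun_vals -map_comp.
rewrite -(count_map (@ffun_mask k n) (fun b => order_iso (mask b w) s)).
apply/permP/uniq_perm; [| exact: uniq_masks |].
  rewrite map_inj_in_uniq; first exact/filter_uniq/enum_uniq.
  move=> f g; rewrite !mem_filter => /andP[incr_f _] /andP[incr_g _].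
  exact: ffun_mask_inj.
move=> b; rewrite mem_masks; apply/mapP/andP => [[f]|[/eqP size_b /eqP count_b]].
  by rewrite mem_filter => /andP[incr_f _] ->; rewrite size_ffun_mask count_ffun_mask.
have [f incr_f <-] := ffun_mask_surj _ size_b count_b.
by exists f; rewrite // mem_filter incr_f mem_enum.
Qed.

(* The number of [m]-subsets of an [n]-set containing a fixed [k]-subset
   (for [k <= n]). *)
Definition nsupsets n k m := (k <= m) * 'C(n - k, m - k).

Lemma nsupsetsSS n k m : nsupsets n.+1 k.+1 m.+1 = nsupsets n k m.
Proof. by rewrite /nsupsets !subSS. Qed.

Lemma nsupsets_pascal n k m : k <= n ->
  nsupsets n k m + nsupsets n k m.+1 = nsupsets n.+1 k m.+1.
Proof.
rewrite /nsupsets => lekn; case: (ltngtP k m.+1) => [|ltmk|->].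
- rewrite ltnS => lekm.
  by rewrite lekm (subSn lekn) (subSn lekm) binS !mul1n addnC.
- by rewrite leqNgt ltnW.
- by rewrite ltnn subnn !bin0.
Qed.

(* Choosing a [k]-submask of an [m]-mask of [w] amounts to choosing the
   [k]-mask first and then one of its [nsupsets] enlargements. *)
Lemma sum_masks_mask {T : Type} (w : seq T) (F : seq T -> nat) m k :
  \sum_(b <- masks (size w) m) \sum_(c <- masks m k) F (mask c (mask b w))
  = nsupsets (size w) k m * \sum_(d <- masks (size w) k) F (mask d w).
Proof.
elim: w F m k => [|x w IHw] F m k.
  by case: m => [|m]; case: k => [|k]; rewrite /= ?big_seq1 ?big_nil ?muln0 // mul1n.
rewrite /= sum_masks_cons [in RHS]sum_masks_cons.
case: m => [|m]; first by rewrite add0n IHw; case: k => [|k]; rewrite /nsupsets ?bin0.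
have pascal k' (S := \sum_(d <- masks (size w) k') F (mask d w)) :
  nsupsets (size w) k' m * S + nsupsets (size w) k' m.+1 * S
  = nsupsets (size w).+1 k' m.+1 * S.
  case: (leqP k' (size w)) => [lekn|ltnk]; first by rewrite -mulnDl nsupsets_pascal.
  by rewrite /S masks_small // big_nil !muln0.
under eq_bigr => b _ do rewrite sum_masks_cons.
case: k => [|k]; first by under eq_bigr => b _ do rewrite add0n; rewrite !IHw pascal.
rewrite big_split /= (IHw (fun s => F (x :: s))) !IHw nsupsetsSS mulnDr -addnA.
by rewrite pascal.
Qed.

Lemma is_perm_uniq u : is_perm u -> uniq u.
Proof. by rewrite /is_perm => /perm_uniq ->; apply: iota_uniq. Qed.

Lemma mem_permutations_iota z m :
  (z \in permutations (iota 1 m)) = is_perm z && (size z == m).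
Proof.
rewrite mem_permutations /is_perm; apply/idP/andP => [perm_z|[perm_z /eqP <-]] //.
by have := perm_size perm_z; rewrite size_iota => size_z; rewrite size_z eqxx.
Qed.

Lemma ple_size {s w : seq nat} : ple s w -> size s <= size w.
Proof.
rewrite /ple => pos_count; rewrite leqNgt; apply/negP => ltws.
by move: pos_count; rewrite pcount_masks (masks_small ltws) big_nil.
Qed.

Lemma pcount_order_iso s {u v : seq nat} : order_iso u v -> pcount s u = pcount s v.
Proof.
move=> iso_uv; have /order_isoP[eq_size _] := iso_uv.
rewrite !pcount_masks eq_size; apply: eq_bigr => b _; congr nat_of_bool.
apply/idP/idP; apply: order_iso_trans; apply: order_iso_mask => //.
exact: order_iso_sym.
Qed.

Lemma pcount_eq_size x y : is_perm x -> is_perm y -> size x = size y ->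
  pcount x y = (x == y).
Proof.
move=> perm_x perm_y eq_size.
rewrite pcount_masks -eq_size masks_full big_seq1 mask_true ?eq_size //.
congr nat_of_bool; apply/idP/eqP => [iso_yx|->]; last exact: order_iso_refl.
rewrite (perm_order_iso_std perm_x (order_iso_refl x)).
by rewrite -(perm_order_iso_std perm_y iso_yx).
Qed.

Lemma sum_perms_order_iso u m (G : seq nat -> nat) : uniq u -> size u = m ->
  \sum_(z <- permutations (iota 1 m)) order_iso u z * G z = G (std u).
Proof.
move=> uniq_u size_u.
have std_u : std u \in permutations (iota 1 m).
  by rewrite mem_permutations_iota is_perm_std // size_std size_u eqxx.
rewrite (bigD1_seq _ std_u (permutations_uniq _)) /= big1_seq.
  by rewrite order_iso_std_perm ?is_perm_std // eqxx mul1n addn0.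
move=> z /andP[neq_z]; rewrite mem_permutations_iota => /andP[perm_z _].
by rewrite order_iso_std_perm // (negPf neq_z).
Qed.

(* Both sides count the pairs formed by an occurrence of [s] in [p] and an
   [m]-set of positions of [p] containing it. *)
Lemma sum_pcount_pcount s p m : is_perm s -> is_perm p ->
  \sum_(z <- permutations (iota 1 m)) pcount s z * pcount z p
  = nsupsets (size p) (size s) m * pcount s p.
Proof.
move=> perm_s perm_p.
transitivity (\sum_(b <- masks (size p) m) pcount s (mask b p)).
  rewrite (eq_big_seq (fun z =>
      \sum_(b <- masks (size p) m) order_iso (mask b p) z * pcount s z)).
    rewrite exchange_big; apply: eq_big_seq => b.
    rewrite mem_masks => /andP[/eqP size_b /eqP count_b].
    have uniq_bp : uniq (mask b p) by apply/mask_uniq/is_perm_uniq.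
    rewrite sum_perms_order_iso ?size_mask ?size_b //.
    exact: pcount_order_iso (order_iso_std uniq_bp).
  move=> z; rewrite mem_permutations_iota => /andP[_ /eqP size_z].
  rewrite [pcount z p]pcount_masks size_z big_distrr.
  by apply: eq_bigr => b _; rewrite mulnC.
rewrite [pcount s p]pcount_masks -(sum_masks_mask p (fun t => order_iso t s)).
apply: eq_big_seq => b; rewrite mem_masks => /andP[/eqP size_b /eqP count_b].
by rewrite pcount_masks size_mask ?size_b ?count_b.
Qed.

Local Open Scope ring_scope.

Lemma sum_ord_if_eq {R : nmodType} n a (c : R) :
  \sum_(m < n) (if m == a :> nat then c else 0) = if (a < n)%N then c else 0.
Proof. by rewrite -big_mkcond (big_ord1_eq _ (fun=> c)). Qed.

Lemma pcountN_ple x y : ~~ ple x y -> pcount x y = 0%N.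
Proof. by rewrite /ple lt0n negbK => /eqP. Qed.

Lemma HincE x y :
  Hinc x y = if size y == (size x).+1 then (pcount x y)%:R else 0.
Proof.
rewrite /Hinc /Defs.eta andbC; case: (size y == _) => //=.
by case: (boolP (ple x y)) => // /pcountN_ple ->.
Qed.

Lemma conv_permutations (F G : incf) x y :
  (forall z, is_perm z -> ~~ ple x z -> F x z = 0) ->
  (forall z, is_perm z -> ~~ ple z y -> G z y = 0) ->
  conv F G x y =
  \sum_(m < (size y).+1) \sum_(z <- permutations (iota 1 m)) F x z * G z y.
Proof.
move=> F0 G0; apply: eq_bigr => m _; rewrite big_mkcond; apply: eq_big_seq => z.
rewrite mem_permutations_iota => /andP[perm_z _].
case: (boolP (ple x z)) => [_|/(F0 _ perm_z) ->]; last by rewrite mul0r.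
by case: (boolP (ple z y)) => [//|/(G0 _ perm_z) ->]; rewrite mulr0.
Qed.

Lemma incpow_Hinc l x y : is_perm x -> is_perm y ->
  incpow Hinc l x y =
  if size y == (size x + l)%N then ((l`! * pcount x y)%N)%:R else 0.
Proof.
elim: l x y => [|l IHl] x y perm_x perm_y.
  rewrite /= /idelta addn0 mul1n; have [eq_size|neq_size] := eqVneq (size y) (size x).
    by rewrite pcount_eq_size //; case: (x == y).
  by have [eq_xy|//] := eqVneq x y; rewrite eq_xy eqxx in neq_size.
rewrite /= conv_permutations; first last.
- by move=> z _ ple_zy; rewrite /Hinc /Defs.eta (negbTE ple_zy).
- by move=> z perm_z /pcountN_ple pcount0; rewrite IHl // pcount0 muln0 if_same.
have layer m : \sum_(z <- permutations (iota 1 m)) incpow Hinc l x z * Hinc z y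
  = if m == (size x + l)%N then
      (if size y == (size x + l.+1)%N then (l.+1`! * pcount x y)%:R else 0)
    else 0.
  rewrite (eq_big_seq (fun z => if m == (size x + l)%N then
      (if size y == m.+1 then ((l`! * (pcount x z * pcount z y))%N)%:R else 0) else 0)).
    case: eqP => [->|_]; last by rewrite big1.
    rewrite addnS.
    have [size_y|_] := eqVneq (size y) (size x + l).+1; last by rewrite big1.
    rewrite -natr_sum -big_distrr sum_pcount_pcount //= size_y.
    have -> : nsupsets (size x + l).+1 (size x) (size x + l) = l.+1.
      by rewrite /nsupsets leq_addr -addnS !addKn binSn mul1n.
    by rewrite factS; congr (_%:R); rewrite /= mulnCA mulnA.
  move=> z; rewrite mem_permutations_iota => /andP[perm_z /eqP size_z].
  rewrite IHl // HincE size_z; case: ifP => _; last by rewrite mul0r.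
  by case: ifP => _; rewrite ?mulr0 // -natrM mulnA.
under eq_bigr => m _ do rewrite layer.
rewrite sum_ord_if_eq; case: eqP => [size_y|_]; last by rewrite if_same.
by rewrite ltnS size_y addnS leqnSn.
Qed.

Theorem mainTheorem4 (sigma pi : seq nat) :
  is_perm sigma -> is_perm pi -> ple sigma pi ->
  forall N : nat, (size pi <= N)%N ->
  Pinc sigma pi = (\sum_(l < N.+1) incpow Hinc l sigma pi / (l`!)%:R)%R.
Proof.
move=> perm_sigma perm_pi ple_sigma_pi N le_pi_N.
have le_size := ple_size ple_sigma_pi.
rewrite (eq_bigr (fun l : 'I_N.+1 =>
  if l == (size pi - size sigma)%N :> nat then Pinc sigma pi else 0)).
  by rewrite sum_ord_if_eq ltnS (leq_trans (leq_subr _ _) le_pi_N).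
move=> l _; rewrite incpow_Hinc //.
have -> : (size pi == (size sigma + l)%N) = (l == (size pi - size sigma)%N :> nat).
  by apply/eqP/eqP; lia.
case: ifP => _; last by rewrite mul0r.
by rewrite natrM mulrAC divff ?mul1r // pnatr_eq0 -lt0n fact_gt0.
Qed.
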